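(* Let $(a_1,\rho_1)\in(0,\infty)\times(0,\infty)$ satisfy $h(a_1,\rho_1)\ge0$. Then for every $a_2\in(0,a_1]$ one has $h(a_2,\rho_2)\ge0$ for all $\rho_2\in\big[\frac{a_2}{a_1}\rho_1,\rho_1\big]$.
   Context: Fix $2<q<\frac{10}{3}<p<6$ and $\mu>0$. For $h:\mathbb{R}^2\to\mathbb{R}$ let $D_x^{-1}h(x,y)=\int_{-\infty}^x h(s,y)\,ds$; let $X$ be the Hilbert space obtained as the completion (in the a.e.-limit sense) of $\{g_x:g\in C_0^\infty(\mathbb{R}^2)\}$ under the norm $\big(\int_{\mathbb{R}^2}(|u_x|^2+|D_x^{-1}u_y|^2+u^2)\big)^{1/2}$, and $\|u\|_0^2=\int_{\mathbb{R}^2}(|u_x|^2+|D_x^{-1}u_y|^2)$. Let $S>0$ be a constant with $|u|_6\le S\|u\|_0$ for all $u\in X$; for $r\in[2,6]$ set $\beta_r=\frac32-\frac3r$ and $C_r=S^{r\beta_r}$. Define $h:(0,\infty)\times(0,\infty)\to\mathbb{R}$ by $$h(a,\rho)=\frac12-\frac{\mu}{q}C_q\rho^{q\beta_q-2}a^{(1-\beta_q)q}-\frac1pC_p\rho^{p\beta_p-2}a^{(1-\beta_p)p}.$$ *)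

From Stdlib Require Import Reals.
Open Scope R_scope.

Definition beta (r : R) : R := 3/2 - 3/r.

Definition Cr (S r : R) : R := Rpower S (r * beta r).

Definition h (S mu p q : R) (a rho : R) : R :=
  1/2
  - mu / q * Cr S q * Rpower rho (q * beta q - 2) * Rpower a ((1 - beta q) * q)
  - 1 / p * Cr S p * Rpower rho (p * beta p - 2) * Rpower a ((1 - beta p) * p).

From Stdlib Require Import Reals Lra Psatz.
Open Scope R_scope.

(* Both terms of [h] are monomials [rho^e1 a^e2] with [e2 = 3 - r/2 >= 0] and
   [e1 + e2 = r - 2 >= 0] (for [r] in [[2, 6]]).  On the region
   [0 < a2 <= a1], [a2/a1 rho1 <= rho2 <= rho1], put [x = ln (rho2/rho1)] and
   [d = ln (a2/a1)], so that [d <= x <= 0]; the log of the monomial ratio is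
   [e1 x + e2 d = (e1 + e2) x + e2 (d - x) <= 0].  Hence both terms only
   shrink and [h] can only grow. *)

Lemma ln_le x y : 0 < x -> x <= y -> ln x <= ln y.
Proof.
intros Hx [Hxy | ->]; [now left; apply ln_increasing | now right].
Qed.

Lemma exp_le x y : x <= y -> exp x <= exp y.
Proof.
intros [Hxy | ->]; [now left; apply exp_increasing | now right].
Qed.

Lemma ln_scaled a1 a2 r : 0 < a1 -> 0 < a2 -> 0 < r ->
  ln (a2 / a1 * r) = ln a2 - ln a1 + ln r.
Proof.
intros Ha1 Ha2 Hr; unfold Rdiv.
rewrite ln_mult, ln_mult, ln_Rinv; try lra;
  auto using Rmult_lt_0_compat, Rinv_0_lt_compat.
Qed.

Lemma Rpower_monomial_le_scaled (e1 e2 a1 a2 r1 r2 : R) :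
  0 <= e2 -> 0 <= e1 + e2 ->
  0 < a2 <= a1 -> 0 < r1 -> a2 / a1 * r1 <= r2 <= r1 ->
  Rpower r2 e1 * Rpower a2 e2 <= Rpower r1 e1 * Rpower a1 e2.
Proof.
intros He2 He12 [Ha2 Ha] Hr1 [Hr2l Hr2u].
assert (Hs : 0 < a2 / a1 * r1).
{ apply Rmult_lt_0_compat; [apply Rdiv_lt_0_compat |]; lra. }
assert (La : ln a2 <= ln a1) by (apply ln_le; lra).
assert (Lu : ln r2 <= ln r1) by (apply ln_le; lra).
assert (Ll : ln a2 - ln a1 + ln r1 <= ln r2).
{ rewrite <- ln_scaled by lra; apply ln_le; lra. }
unfold Rpower; rewrite <- !exp_plus; apply exp_le.
nra.
Qed.

Definition h_monomial (r a rho : R) : R :=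
  Rpower rho (r * beta r - 2) * Rpower a ((1 - beta r) * r).

Lemma h_eq S mu p q a rho :
  h S mu p q a rho
  = 1/2 - mu / q * Cr S q * h_monomial q a rho
        - 1 / p * Cr S p * h_monomial p a rho.
Proof. unfold h, h_monomial; ring. Qed.

Lemma h_monomial_le_scaled r a1 a2 rho1 rho2 : 2 <= r <= 6 ->
  0 < a2 <= a1 -> 0 < rho1 -> a2 / a1 * rho1 <= rho2 <= rho1 ->
  h_monomial r a2 rho2 <= h_monomial r a1 rho1.
Proof.
intros Hr Ha Hrho1 Hrho2; unfold h_monomial.
apply Rpower_monomial_le_scaled; auto; unfold beta.
- replace ((1 - (3 / 2 - 3 / r)) * r) with (3 - r / 2) by (field; lra); lra.
- replace (r * (3 / 2 - 3 / r) - 2 + (1 - (3 / 2 - 3 / r)) * r)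
    with (r - 2) by (field; lra); lra.
Qed.

Lemma h_coeff_nonneg c S r : 0 <= c -> 0 < r -> 0 <= c / r * Cr S r.
Proof.
intros Hc Hr; apply Rmult_le_pos.
- apply Rmult_le_pos; [lra | now left; apply Rinv_0_lt_compat].
- left; apply exp_pos.
Qed.

Theorem lemma5p2 (S mu p q : R) :
  2 < q -> q < 10/3 -> 10/3 < p -> p < 6 -> 0 < mu -> 0 < S ->
  forall a1 rho1 : R, 0 < a1 -> 0 < rho1 ->
  0 <= h S mu p q a1 rho1 ->
  forall a2 : R, 0 < a2 -> a2 <= a1 ->
  forall rho2 : R, a2 / a1 * rho1 <= rho2 <= rho1 ->
  0 <= h S mu p q a2 rho2.
Proof.
intros Hq1 Hq2 Hp1 Hp2 Hmu HS a1 rho1 Ha1 Hrho1 Hh1 a2 Ha2 Ha rho2 Hrho2.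
rewrite h_eq in *.
assert (Mq : h_monomial q a2 rho2 <= h_monomial q a1 rho1)
  by (apply h_monomial_le_scaled; lra).
assert (Mp : h_monomial p a2 rho2 <= h_monomial p a1 rho1)
  by (apply h_monomial_le_scaled; lra).
assert (Cq : 0 <= mu / q * Cr S q) by (apply h_coeff_nonneg; lra).
assert (Cp : 0 <= 1 / p * Cr S p) by (apply h_coeff_nonneg; lra).
nra.
Qed.
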